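(* Let $p,q\in\mathbb{C}$ with $pq\neq1$ and $(p,q)\neq(\tfrac12,\tfrac12)$, and let $\xi_{p,q}\in\mathbb{P}^1(\mathbb{C})$ be as defined below. Then $\mathcal{S}_{p,q}$ is regular if and only if $\xi_{p,q}\neq\infty$ and $|\xi_{p,q}|\le1$. Moreover, if $\mathcal{S}_{p,q}$ is regular, then for every positive triangle triple $\Delta$ one has $\phi(\mathcal{S}_{p,q}(\Delta))=\xi_{p,q}^3\,\phi(\Delta)$.
   Context: $\omega=e^{2\pi i/3}$, $\mathcal{H}^+=\{z:\operatorname{Im}z>0\}$. A triangle triple is $(a,b,c)\in\mathbb{C}^3$ with pairwise distinct entries; it is positive if non-collinear and $\operatorname{Im}\frac{a-b}{c-b}>0$. For $pq\neq1$, $\alpha_{p,q}=\frac{p(1-q)}{1-pq}$, $\beta_{p,q}=\frac{q(1-p)}{1-pq}$, $\gamma_{p,q}=\frac{(1-p)(1-q)}{1-pq}$ and $\mathcal{S}_{p,q}(a,b,c)=(\alpha_{p,q}a+\beta_{p,q}b+\gamma_{p,q}c,\ \alpha_{p,q}b+\beta_{p,q}c+\gamma_{p,q}a,\ \alpha_{p,q}c+\beta_{p,q}a+\gamma_{p,q}b)$. $\mathcal{S}_{p,q}$ is called regular if either $p=q\neq\frac12$, or $p\neq q$ and $t_{p,q}:=\frac{(p-1)(2q-1)}{p-q}\in\mathbb{R}\cup\mathcal{H}^+$. Define $\xi_{p,q}=\frac{(p-q)+(p-1)(2q-1)\omega}{(p-q)+(p-1)(2q-1)\omega^2}\in\mathbb{P}^1(\mathbb{C})$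 (numerator and denominator do not both vanish when $(p,q)\neq(\frac12,\frac12)$, $pq\ne 1$). For a positive triangle triple $(a,b,c)$, its modulus is $\phi(a,b,c)=\left(\frac{a+b\omega+c\omega^2}{a+b\omega^2+c\omega}\right)^3$, which lies in the unit disk $\{|z|<1\}$. *)

(* The complex numbers are modelled by an arbitrary
   numClosedFieldType C (of which the complex field is an instance). *)
From HB Require Import structures.
From mathcomp Require Import all_boot all_order all_algebra.
Set Implicit Arguments. Unset Strict Implicit. Unset Printing Implicit Defensive.
Import Order.TTheory GRing.Theory Num.Theory.
Local Open Scope ring_scope.

Section Defs.
Variable C : numClosedFieldType.

(* omega = exp(2 pi i / 3) = -1/2 + i sqrt(3)/2 *)
Definition omega : C := (-1 + 'i * sqrtC 3) / 2%:R.

Definition triangle_triple (a b c : C) : Prop := a != b /\ b != c /\ a != c.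

Definition collinear (a b c : C) : Prop := ((a - b) / (c - b)) \is Num.real.

Definition positive_triple (a b c : C) : Prop :=
  triangle_triple a b c /\ ~ collinear a b c /\ 0 < 'Im ((a - b) / (c - b)).

Definition alpha (p q : C) : C := p * (1 - q) / (1 - p * q).
Definition beta (p q : C) : C := q * (1 - p) / (1 - p * q).
Definition gamma (p q : C) : C := (1 - p) * (1 - q) / (1 - p * q).

Definition Spq (p q : C) (t : C * C * C) : C * C * C :=
  let: (a, b, c) := t in
  (alpha p q * a + beta p q * b + gamma p q * c,
   alpha p q * b + beta p q * c + gamma p q * a,
   alpha p q * c + beta p q * a + gamma p q * b).

Definition tpq (p q : C) : C := (p - 1) * (2%:R * q - 1) / (p - q).

(* t in R ∪ H^+  iff  Im t >= 0 *)
Definition regular (p q : C) : Prop :=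
  (p = q /\ p != 2%:R^-1) \/ (p != q /\ 0 <= 'Im (tpq p q)).

(* xi_{p,q} in P^1(C): None represents infinity *)
Definition xi_num (p q : C) : C := (p - q) + (p - 1) * (2%:R * q - 1) * omega.
Definition xi_den (p q : C) : C := (p - q) + (p - 1) * (2%:R * q - 1) * omega ^+ 2.
Definition xi (p q : C) : option C :=
  if xi_den p q == 0 then None else Some (xi_num p q / xi_den p q).

Definition modulus (t : C * C * C) : C :=
  let: (a, b, c) := t in
  ((a + b * omega + c * omega ^+ 2) / (a + b * omega ^+ 2 + c * omega)) ^+ 3.
End Defs.

(** Put [u = p - q] and [v = (p - 1)(2q - 1)], so that [xi_num = u + v w],
    [xi_den = u + v w^2] and [t_pq = v / u].  As [w^2 = conj w] and
    [w - w^2 = i sqrt 3], one gets [|u + v w^2|^2 - |u + v w|^2 = 2 sqrt 3 Im (v conj u)],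
    whose sign is that of [Im t_pq]; this is the regularity criterion.
    [S_pq] commutes with the cyclic shift of the vertices, so the transforms
    [(a, b, c) |-> a + b z + c z^2] at the primitive cube roots of unity
    [z = w, w^2] are eigenvectors of it, with eigenvalues [xi_num / (1 - pq)] and
    [xi_den / (1 - pq)]; the modulus is the cube of their ratio. *)
From HB Require Import structures.
From mathcomp Require Import all_boot all_order all_algebra.
From mathcomp Require Import ring.
Set Implicit Arguments. Unset Strict Implicit. Unset Printing Implicit Defensive.
Import Order.TTheory GRing.Theory Num.Theory.
Local Open Scope ring_scope.

Section Omega.
Variable C : numClosedFieldType.
Local Notation w := (omega C).
Local Notation s := (sqrtC (3%:R : C)).

Lemma natr2_neq0 : (2%:R : C) != 0.
Proof. by rewrite pnatr_eq0. Qed.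

Lemma sqrtC3_gt0 : 0 < s.
Proof. by rewrite sqrtC_gt0 ltr0n. Qed.

Lemma omega_sqr : w ^+ 2 = (-1 - 'i * s) / 2%:R.
Proof.
have hs : s ^+ 2 = 3%:R by exact: sqrtCK.
have two_neq0 := natr2_neq0.
have -> : w ^+ 2 = (1 - 2%:R * 'i * s + 'i ^+ 2 * s ^+ 2) / 4%:R.
  by rewrite /omega; field.
by rewrite sqrCi hs; field.
Qed.

Lemma omega_conj : w^* = w ^+ 2.
Proof.
rewrite omega_sqr /omega fmorph_div rmorphD rmorphN rmorph1 rmorphM /= conjCi.
by rewrite !conjC_nat (conj_Creal (sqrtC_real _)) ?ler0n // mulNr.
Qed.

Lemma omega_sqr_conj : (w ^+ 2)^* = w.
Proof. by rewrite -omega_conj conjCK. Qed.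

Lemma omega_sub_sqr : w - w ^+ 2 = 'i * s.
Proof.
have two_neq0 := natr2_neq0.
by rewrite omega_sqr /omega; field.
Qed.

Lemma omega_root : 1 + w + w ^+ 2 = 0.
Proof.
have two_neq0 := natr2_neq0.
by rewrite omega_sqr /omega; field.
Qed.

Lemma omega_sqr_sqr : (w ^+ 2) ^+ 2 = w.
Proof.
have -> : (w ^+ 2) ^+ 2 = w + (w ^+ 2 - w) * (1 + w + w ^+ 2) by ring.
by rewrite omega_root mulr0 addr0.
Qed.

Lemma omega_sqr_root : 1 + w ^+ 2 + (w ^+ 2) ^+ 2 = 0.
Proof. by rewrite omega_sqr_sqr addrAC omega_root. Qed.

Lemma normD_omega_sqr_sub (u v : C) :
  `|u + v * w ^+ 2| ^+ 2 - `|u + v * w| ^+ 2 = 2%:R * s * 'Im (v * u^*).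
Proof.
have two_neq0 := natr2_neq0.
have conjD z : (u + v * z)^* = u^* + v^* * z^* by rewrite rmorphD rmorphM.
rewrite !normCK !conjD omega_conj omega_sqr_conj ImE rmorphM /= conjCK.
have -> : (u + v * w ^+ 2) * (u^* + v^* * w) - (u + v * w) * (u^* + v^* * w ^+ 2)
    = (u * v^* - v * u^*) * (w - w ^+ 2) by ring.
by rewrite omega_sub_sqr; field.
Qed.

Lemma omega_combinations_eq0 (u v : C) :
  u + v * w = 0 -> u + v * w ^+ 2 = 0 -> (u, v) = (0, 0).
Proof.
move=> hw hw2.
have : v * (w - w ^+ 2) = (u + v * w) - (u + v * w ^+ 2) by ring.
rewrite hw hw2 subrr omega_sub_sqr => /eqP.
rewrite mulf_eq0 mulf_eq0 (negbTE (neq0Ci C)) (gt_eqF sqrtC3_gt0) !orbF => /eqP v0.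
by move: hw; rewrite v0 mul0r addr0 => ->.
Qed.

End Omega.

Section Transform.
Variable C : numClosedFieldType.
Local Notation w := (omega C).

Definition dft (z : C) (t : C * C * C) : C :=
  let: (a, b, c) := t in a + b * z + c * z ^+ 2.

Lemma modulusE (t : C * C * C) : modulus t = (dft w t / dft (w ^+ 2) t) ^+ 3.
Proof. by case: t => [[a b] c]; rewrite /= omega_sqr_sqr. Qed.

Lemma dft_Spq (p q z : C) (t : C * C * C) : p * q != 1 -> 1 + z + z ^+ 2 = 0 ->
  dft z (Spq p q t) = (p - q + (p - 1) * (2%:R * q - 1) * z) / (1 - p * q) * dft z t.
Proof.
case: t => [[a b] c] hpq hz; have hk : 1 - p * q != 0 by rewrite subr_eq0 eq_sym.
apply/eqP; rewrite -subr_eq0 /= /alpha /beta /gamma.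
rewrite [X in X == 0](_ : _ = (1 + z + z ^+ 2) * ((1 - z) * (q * (1 - p) * b
    + (1 - p) * (1 - q) * c + q * (1 - p) * c * z) + q * (1 - p) * (a + b * z + c * z ^+ 2))
    / (1 - p * q)); first by rewrite hz !mul0r.
by field.
Qed.

Lemma modulus_Spq (p q : C) (t : C * C * C) : p * q != 1 -> xi_den p q != 0 ->
  modulus (Spq p q t) = (xi_num p q / xi_den p q) ^+ 3 * modulus t.
Proof.
move=> hpq hden; have hk : 1 - p * q != 0 by rewrite subr_eq0 eq_sym.
rewrite !modulusE dft_Spq ?omega_root // dft_Spq ?omega_sqr_root // -exprMn.
congr (_ ^+ 3); rewrite -/(xi_num p q) -/(xi_den p q).
(* when the second transform vanishes both sides are 0, as x / 0 = 0 *)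
have [->|ht] := eqVneq (dft (w ^+ 2) t) 0; first by rewrite mulr0 invr0 !mulr0.
by field; rewrite ht hden hk.
Qed.

End Transform.

Section Criterion.
Variable C : numClosedFieldType.
Implicit Types p q : C.

Lemma norm_xi_num_le_den p q :
  (`|xi_num p q| <= `|xi_den p q|) = (0 <= 'Im ((p - 1) * (2%:R * q - 1) * (p - q)^*)).
Proof.
rewrite -(ler_pXn2r (n := 2)) ?nnegrE // -subr_ge0 normD_omega_sqr_sub.
by rewrite pmulr_rge0 // mulr_gt0 ?ltr0n ?sqrtC3_gt0.
Qed.

Lemma Im_div_ge0 (u v : C) : u != 0 -> (0 <= 'Im (v / u)) = (0 <= 'Im (v * u^*)).
Proof.
move=> hu; have hnorm : 0 < `|u| ^- 2 by rewrite invr_gt0 exprn_gt0 // normr_gt0.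
by rewrite invC_norm (mulrCA v) (ImMl (gtr0_real hnorm)) pmulr_rge0.
Qed.

Lemma regularE p q : (p, q) != (2%:R^-1, 2%:R^-1) ->
  regular p q <-> 0 <= 'Im ((p - 1) * (2%:R * q - 1) * (p - q)^*).
Proof.
move=> hne; rewrite /regular /tpq; have [epq|npq] := eqVneq p q.
  subst q; rewrite subrr conjC0 mulr0 raddf0 lexx.
  by split => // _; left; split => //; apply: contra hne => /eqP ->.
have hu : p - q != 0 by rewrite subr_eq0.
rewrite -(Im_div_ge0 _ hu).
by split => [[[/eqP]|[]] //|]; [rewrite (negbTE npq)|right].
Qed.

Lemma xi_le1P p q : (p - q != 0) || ((p - 1) * (2%:R * q - 1) != 0) ->
  (exists x, xi p q = Some x /\ `|x| <= 1) <-> `|xi_num p q| <= `|xi_den p q|.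
Proof.
move=> huv; rewrite /xi; split => [[x []]|hle].
  case: eqP => // /eqP hden [<-].
  by rewrite normf_div ler_pdivrMr ?normr_gt0 // mul1r; apply.
have hden : xi_den p q != 0.
  apply: contraL huv => /eqP hden; move: hle; rewrite hden normr0 normr_le0 => /eqP hnum.
  by case: (omega_combinations_eq0 hnum hden) => -> ->; rewrite eqxx.
exists (xi_num p q / xi_den p q); rewrite (negbTE hden); split => //.
by rewrite normf_div ler_pdivrMr ?normr_gt0 // mul1r.
Qed.

Lemma xi_coef_neq0 p q : p * q != 1 -> (p, q) != (2%:R^-1, 2%:R^-1) ->
  (p - q != 0) || ((p - 1) * (2%:R * q - 1) != 0).
Proof.
move=> hpq hne; rewrite subr_eq0; have [epq|//] := eqVneq p q; subst q.
rewrite /= mulf_eq0 !subr_eq0 negb_or; apply/andP; split.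
  by apply: contra hpq => /eqP ->; rewrite mul1r.
apply: contra hne => /eqP h2p; rewrite xpair_eqE andbb; apply/eqP.
by rewrite -[p](mulKf (natr2_neq0 C)) h2p mulr1.
Qed.

End Criterion.

Theorem mainTheorem3 (C : numClosedFieldType) (p q : C)
  (hpq : p * q != 1) (hne : (p, q) != (2%:R^-1, 2%:R^-1)) :
  (regular p q <-> exists x : C, xi p q = Some x /\ `|x| <= 1) /\
  (regular p q ->
     forall x : C, xi p q = Some x ->
     forall a b c : C, positive_triple a b c ->
       modulus (Spq p q (a, b, c)) = x ^+ 3 * modulus (a, b, c)).
Proof.
split.
  apply: iff_trans (regularE hne) _; rewrite -norm_xi_num_le_den.
  exact: iff_sym (xi_le1P (xi_coef_neq0 hpq hne)).
move=> _ x; rewrite /xi; case: eqP => // /eqP hden [<-] a b c _.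
exact: modulus_Spq.
Qed.
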